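(* ($q$-Seidel formula) Let $q\neq-1$ be real and $n\ge1$. Then $$\sum_{k=0}^{\lfloor n/2\rfloor}q^{\binom{2k}{2}}\begin{bmatrix} n\\ 2k\end{bmatrix}(-1)^k\frac{(-q^{n-2k+1};q)_{2k}}{(-q^{2n-2k};q)_{2k}}\,G_{2n-2k}(q)=[n=1].$$
   Context: Notation: $[m]=1+q+\cdots+q^{m-1}$, $[m]!=[1]\cdots[m]$, $\begin{bmatrix} m\\ j\end{bmatrix}=\frac{[m]!}{[j]![m-j]!}$; $(a;q)_m=(1-a)(1-aq)\cdots(1-aq^{m-1})$ (so $(-a;q)_m=(1+a)(1+aq)\cdots(1+aq^{m-1})$, and $(a;q)_0=1$); $[P]$ is $1$ if $P$ holds and $0$ otherwise. With $e(z)=\sum_{m\ge0}z^m/[m]!$, the $q$-Genocchi numbers $G_{2m}(q)$, $m\ge1$, are defined by the formal power series identity $z\frac{e(z)-e(-z)}{e(z)+e(-z)}=\sum_{m\ge1}\frac{(-1)^{m-1}G_{2m}(q)(-q;q)_{2m-1}}{[2m]!}z^{2m}$. *)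

From HB Require Import structures.
From mathcomp Require Import all_boot all_order all_algebra.
From mathcomp Require Import reals.
Set Implicit Arguments. Unset Strict Implicit. Unset Printing Implicit Defensive.
Import Order.TTheory GRing.Theory Num.Theory.
Local Open Scope ring_scope.

Section QDefs.
Variable R : realType.
Implicit Types (q a : R) (m j n : nat).

Definition qint q m : R := \sum_(i < m) q ^+ i.
Definition qfact q m : R := \prod_(i < m) qint q i.+1.
Definition qbinom q m j : R := qfact q m / (qfact q j * qfact q (m - j)).
Definition qpoch a q m : R := \prod_(i < m) (1 - a * q ^+ i).

(* Formal power series are coefficient sequences nat -> R.
   fps_div b a is the quotient series b/a (a has invertible constant term):
   its coefficients c satisfy c_n = (b_n - sum_{k<n} c_k a_{n-k}) / a_0. *)
Fixpoint fps_div_seq (b a : nat -> R) (n : nat) : seq R :=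
  match n with
  | 0 => [:: b 0%N / a 0%N]
  | n'.+1 => let s := fps_div_seq b a n' in
             rcons s ((b n - \sum_(k < n) s`_k * a (n - k)%N) / a 0%N)
  end.
Definition fps_div (b a : nat -> R) (n : nat) : R := (fps_div_seq b a n)`_n.

Definition qexp_coef q m : R := (qfact q m)^-1.
Definition qden_coef q m : R := qexp_coef q m + (-1) ^+ m * qexp_coef q m.
(* coefficients of z (e(z) - e(-z)) *)
Definition qnum_coef q m : R :=
  if m is m'.+1 then qexp_coef q m' - (-1) ^+ m' * qexp_coef q m' else 0.
(* coefficients of z (e(z)-e(-z))/(e(z)+e(-z)) *)
Definition qgen_series q : nat -> R := fps_div (qnum_coef q) (qden_coef q).

(* q-Genocchi number G_N(q), meaningful for N = 2m with m >= 1: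
   coefficient of z^(2m) is (-1)^(m-1) G_(2m)(q) (-q;q)_(2m-1) / [2m]!. *)
Definition qGenocchi q (N : nat) : R :=
  let m := N./2 in
  (-1) ^+ m.-1 * qgen_series q N * qfact q N / qpoch (- q) q (N.-1).
End QDefs.

(* Work in the quantum plane, y x = q x y, with formal series stored by their
   normally ordered coefficients.  For the q-exponentials e(z) = sum z^n/[n]!
   and E(z) = sum q^C(n,2) z^n/[n]! one has e(x + y) = e(x) e(y),
   E(x + y) = E(y) E(x) and e(-z) E(z) = 1 (Rothe's q-binomial theorem).
   Put D = e E and p = e(-z)/(e(z) + e(-z)), so that (D + 1) p = 1; then
   Q = E(x) p(x + y) e(x) is a right inverse of M = D(y) + D(-x).  The
   anti-automorphism x |-> -y, y |-> -x fixes M, hence also Q, so the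
   coefficients of x^m y^(m+1) and x^(m+1) y^m in Q are opposite.  Written
   out, this says that sum_(s <= n) T(n, s) = 0 for explicit terms T(n, s);
   since the q-Genocchi series is even, the odd-indexed terms vanish for n > 1,
   and the even-indexed ones are, up to a common factor, the summands of the
   q-Seidel formula. *)

From HB Require Import structures.
From mathcomp Require Import all_boot all_order all_algebra.
From mathcomp Require Import reals.
From mathcomp Require Import zify ring.
From Stdlib Require Import FunctionalExtensionality.
Set Implicit Arguments.
Unset Strict Implicit.
Unset Printing Implicit Defensive.
Import Order.TTheory GRing.Theory Num.Theory.
Local Open Scope ring_scope.

Lemma sum_triangle (V : nmodType) (F : nat -> nat -> V) N :
  \sum_(a < N.+1) \sum_(b < a.+1) F b (a - b)%N =
  \sum_(b < N.+1) \sum_(c < (N - b).+1) F b c.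
Proof.
elim: N => [|N IH]; first by rewrite !big_ord_recl !big_ord0.
rewrite big_ord_recr /= IH [RHS]big_ord_recr /=.
rewrite [in RHS](eq_bigr (fun b : 'I_N.+1 =>
    \sum_(c < (N - b).+1) F b c + F b (N.+1 - b)%N)); last first.
  by move=> b _; rewrite subSn ?big_ord_recr // -ltnS.
rewrite big_split /= -addrA; congr (_ + _).
by rewrite big_ord_recr /= subnn big_ord1.
Qed.

Lemma sum_parity_split (V : nmodType) (h : nat -> V) n :
  \sum_(s < n.+1) h s =
  \sum_(k < n./2.+1) h (2 * k)%N + \sum_(k < uphalf n) h (2 * k).+1.
Proof.
elim: n => [|n IH]; first by rewrite !big_ord1 big_ord0 addr0.
rewrite big_ord_recr /= IH !uphalf_half /=.
have := odd_double_half n; case: (odd n) => /= hn.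
  rewrite add1n [X in _ = X + _]big_ord_recr /= [RHS]addrAC.
  by congr (_ + h _); lia.
rewrite add0n [X in _ = _ + X]big_ord_recr /= addrA.
by congr (_ + h _); lia.
Qed.

Section Convolution.
Variable R : comPzRingType.
Implicit Types u v w : nat -> R.

Definition conv u v n := \sum_(k < n.+1) u k * v (n - k)%N.
Definition delta n : R := (n == 0%N)%:R.
Definition addps u v n := u n + v n.
Definition negps u n := (-1) ^+ n * u n.

Lemma convC u v : conv u v = conv v u.
Proof.
apply: functional_extensionality => n; rewrite /conv (reindex_inj rev_ord_inj).
apply: eq_bigr => i _ /=; rewrite subSS subKn; [exact: mulrC | by rewrite -ltnS].
Qed.

Lemma convA u v w : conv (conv u v) w = conv u (conv v w).
Proof.
apply: functional_extensionality => n; rewrite /conv.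
pose G b c := u b * (v c * w (n - b - c)%N).
transitivity (\sum_(a < n.+1) \sum_(b < a.+1) G b (a - b)%N).
  apply: eq_bigr => a _; rewrite mulr_suml; apply: eq_bigr => b _ /=.
  have hb := ltn_ord b; have ha := ltn_ord a.
  rewrite /G -mulrA; congr (_ * (_ * w _)); lia.
by rewrite sum_triangle; apply: eq_bigr => b _; rewrite mulr_sumr.
Qed.

Lemma conv_delta u : conv u delta = u.
Proof.
apply: functional_extensionality => n.
rewrite /conv big_ord_recr /= subnn /delta eqxx mulr1 big1 ?add0r // => i _.
by rewrite subn_eq0 leqNgt ltn_ord mulr0.
Qed.

Lemma conv_addl u v w : conv (addps u v) w = addps (conv u w) (conv v w).
Proof.
apply: functional_extensionality => n; rewrite /conv /addps -big_split.
by apply: eq_bigr => k _; rewrite mulrDl.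
Qed.

Lemma negps_conv u v : negps (conv u v) = conv (negps u) (negps v).
Proof.
apply: functional_extensionality => n; rewrite /negps /conv mulr_sumr.
apply: eq_bigr => k _; have hk : (k <= n)%N by rewrite -ltnS.
by rewrite -{1}(subnK hk) exprD; ring.
Qed.

Lemma negpsK : involutive negps.
Proof.
move=> u; apply: functional_extensionality => n.
by rewrite /negps mulrA -exprD addnn -mul2n exprM sqrrN expr1n expr1n mul1r.
Qed.

Lemma negps_delta : negps delta = delta.
Proof.
by apply: functional_extensionality => -[|n]; rewrite /negps /delta /= ?mul1r ?mulr0.
Qed.

End Convolution.

Arguments delta {R} n.

Section QuantumPlane.
Variables (R : comPzRingType) (q : R).

(* c : qseries stands for the series sum_(A, B) c A B x^A y^B of the quantum
   plane, in which y x = q x y; qX u and qY u are the series u(x) and u(y). *)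
Definition qseries := nat -> nat -> R.
Implicit Types (c d e : qseries) (u v : nat -> R).

Lemma qseries_ext c d : (forall A B, c A B = d A B) -> c = d.
Proof. by move=> h; do 2 apply: functional_extensionality => ?; exact: h. Qed.

Definition qmul c d : qseries := fun A B =>
  \sum_(a < A.+1) \sum_(b < B.+1)
     c a b * d (A - a)%N (B - b)%N * q ^+ (b * (A - a)).
Definition qadd c d : qseries := fun A B => c A B + d A B.
Definition qone : qseries := fun A B => ((A == 0%N) && (B == 0%N))%:R.
Definition qX u : qseries := fun A B => if B == 0%N then u A else 0.
Definition qY u : qseries := fun A B => if A == 0%N then u B else 0.

Lemma qmulA : associative qmul.
Proof.
move=> c d e; symmetry; apply: qseries_ext => A B; rewrite /qmul.
pose H a1 a2 b1 b2 := c a1 b1 * d a2 b2 * e (A - a1 - a2)%N (B - b1 - b2)%N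
   * q ^+ (b1 * a2 + (b1 + b2) * (A - a1 - a2)).
pose K a1 a2 := \sum_(b1 < B.+1) \sum_(b2 < (B - b1).+1) H a1 a2 b1 b2.
transitivity (\sum_(a < A.+1) \sum_(a1 < a.+1) K a1 (a - a1)%N).
  apply: eq_bigr => a _.
  rewrite (eq_bigr (fun b : 'I_B.+1 => \sum_(a1 < a.+1) \sum_(b1 < b.+1)
             H a1 (a - a1)%N b1 (b - b1)%N)); last first.
    move=> b _; rewrite !mulr_suml; apply: eq_bigr => a1 _.
    rewrite !mulr_suml; apply: eq_bigr => b1 _.
    have := ltn_ord a; have := ltn_ord b; have := ltn_ord a1; have := ltn_ord b1.
    move=> hb1 ha1 hb ha; rewrite /H.
    have -> : (A - a1 - (a - a1) = A - a)%N by lia.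
    have -> : (B - b1 - (b - b1) = B - b)%N by lia.
    have -> : (b1 + (b - b1) = b)%N by lia.
    by rewrite exprD; ring.
  by rewrite exchange_big /=; apply: eq_bigr => a1 _; rewrite sum_triangle.
rewrite sum_triangle; apply: eq_bigr => a1 _.
rewrite (eq_bigr (fun b1 : 'I_B.+1 => \sum_(a2 < (A - a1).+1)
           \sum_(b2 < (B - b1).+1) H a1 a2 b1 b2)); last first.
  move=> b1 _; rewrite mulr_sumr mulr_suml; apply: eq_bigr => a2 _.
  rewrite mulr_sumr mulr_suml; apply: eq_bigr => b2 _.
  have := ltn_ord a1; have := ltn_ord a2 => ha2 ha1.
  have E : (b1 * a2 + (b1 + b2) * (A - a1 - a2)
             = b2 * (A - a1 - a2) + b1 * (A - a1))%N by nia.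
  by rewrite /H E exprD; ring.
by rewrite exchange_big.
Qed.

Lemma qmul1s : left_id qone qmul.
Proof.
move=> c; apply: qseries_ext => A B; rewrite /qmul big_ord_recl [X in _ + X]big1 ?addr0.
  rewrite big_ord_recl big1 ?addr0; last by move=> b _; rewrite /qone andbF !mul0r.
  by rewrite /qone /= mul1r !subn0 mul0n expr0 mulr1.
by move=> a _; apply: big1 => b _; rewrite /qone /= !mul0r.
Qed.

Lemma qmuls1 : right_id qone qmul.
Proof.
move=> c; apply: qseries_ext => A B; rewrite /qmul big_ord_recr /= [X in X + _]big1 ?add0r.
  rewrite big_ord_recr big1 /= ?add0r; last first.
    by move=> b _; rewrite /qone /= subnn /= subn_eq0 leqNgt ltn_ord mulr0 mul0r.
  by rewrite /qone !subnn /= mulr1 muln0 expr0 mulr1.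
move=> a _; apply: big1 => b _.
by rewrite /qone subn_eq0 leqNgt ltn_ord /= mulr0 mul0r.
Qed.

Lemma qmulDl : left_distributive qmul qadd.
Proof.
move=> c d e; apply: qseries_ext => A B; rewrite /qmul /qadd -big_split.
by apply: eq_bigr => a _; rewrite -big_split; apply: eq_bigr => b _; rewrite !mulrDl.
Qed.

Lemma qmulDr : right_distributive qmul qadd.
Proof.
move=> c d e; apply: qseries_ext => A B; rewrite /qmul /qadd -big_split.
apply: eq_bigr => a _; rewrite -big_split; apply: eq_bigr => b _.
by rewrite mulrDr mulrDl.
Qed.

Lemma qaddC : commutative qadd.
Proof. by move=> c d; apply: qseries_ext => A B; rewrite /qadd addrC. Qed.

Lemma qmul_qX_coef c u A B :
  qmul c (qX u) A B = \sum_(a < A.+1) c a B * u (A - a)%N * q ^+ (B * (A - a)).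
Proof.
apply: eq_bigr => a _; rewrite big_ord_recr /= subnn /qX eqxx big1 ?add0r // => b _.
by rewrite subn_eq0 leqNgt ltn_ord mulr0 mul0r.
Qed.

Lemma qmul_qY_coef c u A B :
  qmul c (qY u) A B = \sum_(b < B.+1) c A b * u (B - b)%N.
Proof.
rewrite /qmul big_ord_recr /= big1 ?add0r.
  by apply: eq_bigr => b _; rewrite /qY subnn eqxx muln0 expr0 mulr1.
move=> a _; apply: big1 => b _.
by rewrite /qY subn_eq0 leqNgt ltn_ord mulr0 mul0r.
Qed.

Lemma qX_mul_coef u c A B :
  qmul (qX u) c A B = \sum_(a < A.+1) u a * c (A - a)%N B.
Proof.
apply: eq_bigr => a _; rewrite big_ord_recl /= subn0 mul0n expr0 mulr1 big1 ?addr0 //.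
by move=> b _; rewrite /qX !mul0r.
Qed.

Lemma qmulXX u v : qmul (qX u) (qX v) = qX (conv u v).
Proof.
apply: qseries_ext => A B; rewrite qmul_qX_coef /qX /conv.
case: eqP => [->|_]; first by apply: eq_bigr => a _; rewrite mul0n expr0 mulr1.
by apply: big1 => a _; rewrite !mul0r.
Qed.

Lemma qmulYY u v : qmul (qY u) (qY v) = qY (conv u v).
Proof.
apply: qseries_ext => A B; rewrite qmul_qY_coef /qY /conv.
by case: eqP => _ //; apply: big1 => b _; rewrite mul0r.
Qed.

Lemma qmulXY_coef u v A B : qmul (qX u) (qY v) A B = u A * v B.
Proof.
rewrite qmul_qY_coef big_ord_recl /qX /= subn0 big1 ?addr0 // => b _.
by rewrite mul0r.
Qed.

Lemma qmulYX_coef u v A B : qmul (qY u) (qX v) A B = u B * v A * q ^+ (B * A).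
Proof.
rewrite qmul_qX_coef big_ord_recl /qY /= subn0 big1 ?addr0 // => a _.
by rewrite !mul0r.
Qed.

Lemma qX_delta : qX delta = qone.
Proof. by apply: qseries_ext => A B; rewrite /qX /delta /qone; case: eqP; rewrite ?andbT ?andbF. Qed.

Definition zps : nat -> R := fun n => (n == 1%N)%:R.
Definition qxy : qseries := qadd (qX zps) (qY zps).

Lemma sum_mul_zps (F : nat -> R) n :
  \sum_(a < n.+1) F a * zps (n - a)%N = if n is n'.+1 then F n' else 0.
Proof.
case: n => [|n]; first by rewrite big_ord1 /zps mulr0.
rewrite big_ord_recr /= subnn /zps /= mulr0 addr0 big_ord_recr /= subSnn mulr1.
rewrite big1 ?add0r // => a _ /=; have := ltn_ord a.
by case: eqP => [|_ _]; [lia | rewrite mulr0].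
Qed.

Lemma qmul_qxy_coef c A B : qmul c qxy A B =
  (if A is A'.+1 then q ^+ B * c A' B else 0) + (if B is B'.+1 then c A B' else 0).
Proof.
rewrite /qxy qmulDr /qadd qmul_qX_coef qmul_qY_coef; congr (_ + _); last first.
  by rewrite (sum_mul_zps (c A)).
rewrite (eq_bigr (fun a : 'I_A.+1 => c a B * q ^+ (B * (A - a)) * zps (A - a)%N)).
  rewrite (sum_mul_zps (fun a => c a B * q ^+ (B * (A - a)))).
  by case: A => //= A; rewrite subSnn muln1 mulrC.
by move=> a _; rewrite mulrAC.
Qed.

Fixpoint xpy_pow n : qseries := if n is n'.+1 then qmul (xpy_pow n') qxy else qone.

Lemma xpy_powD m k : qmul (xpy_pow m) (xpy_pow k) = xpy_pow (m + k).
Proof. by elim: k => [|k IH]; rewrite ?addn0 ?qmuls1 // addnS /= qmulA IH. Qed.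

Lemma xpy_pow_hom n A B : (A + B != n)%N -> xpy_pow n A B = 0.
Proof.
elim: n A B => [|n IH] A B hAB /=.
  by rewrite /qone; move: hAB; rewrite addn_eq0 => /negbTE ->.
rewrite qmul_qxy_coef; case: A hAB => [|A] hAB; case: B hAB => [|B] hAB //=;
  rewrite ?IH ?mulr0 ?addr0 //; move: hAB; lia.
Qed.

(* u(x + y); the coefficient of x^A y^B only involves (x + y)^(A + B) because
   (x + y)^n is homogeneous of degree n. *)
Definition qsubst u : qseries := fun A B => u (A + B)%N * xpy_pow (A + B) A B.

Lemma qsubst_mul u v : qmul (qsubst u) (qsubst v) = qsubst (conv u v).
Proof.
apply: qseries_ext => A B; rewrite /qsubst /conv /qmul mulr_suml.
set N := (A + B)%N.
rewrite (eq_bigr (fun m : 'I_N.+1 => \sum_(a < A.+1) \sum_(b < B.+1)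
   u m * v (N - m)%N * (xpy_pow m a b * xpy_pow (N - m) (A - a)%N (B - b)%N
                         * q ^+ (b * (A - a))))); last first.
  move=> m _; have hm : (m <= N)%N by rewrite -ltnS.
  have -> : xpy_pow N = qmul (xpy_pow m) (xpy_pow (N - m)).
    by rewrite xpy_powD subnKC.
  rewrite /qmul mulr_sumr; apply: eq_bigr => a _.
  by rewrite mulr_sumr.
rewrite [RHS]exchange_big /=; apply: eq_bigr => a _.
rewrite [RHS]exchange_big /=; apply: eq_bigr => b _.
have := ltn_ord a; have := ltn_ord b => hb ha.
have hab : (a + b < N.+1)%N by rewrite /N; lia.
rewrite (big_only1 (Ordinal hab)) //=.
  have -> : (N - (a + b) = A - a + (B - b))%N by rewrite /N; lia.
  by ring.
move=> m hm _; rewrite xpy_pow_hom ?mul0r ?mulr0 //.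
by apply: contra hm => /eqP h; apply/eqP/val_inj; rewrite /= h.
Qed.

Lemma qsubst_delta : qsubst delta = qone.
Proof.
by apply: qseries_ext => -[|A] [|B]; rewrite /qsubst /delta /qone /= ?mul1r ?mul0r.
Qed.

Lemma qsubst_add u v : qsubst (addps u v) = qadd (qsubst u) (qsubst v).
Proof. by apply: qseries_ext => A B; rewrite /qsubst /addps /qadd mulrDl. Qed.

(* the anti-automorphism of the quantum plane exchanging x and y up to sign:
   x |-> -y, y |-> -x *)
Definition qswap c : qseries := fun A B => (-1) ^+ (A + B) * c B A.

Lemma qswap_mul c d : qswap (qmul c d) = qmul (qswap d) (qswap c).
Proof.
apply: qseries_ext => A B; rewrite /qswap /qmul.
transitivity (\sum_(b < B.+1) \sum_(a < A.+1) (-1) ^+ (A + B) *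
   (c b a * d (B - b)%N (A - a)%N * q ^+ (a * (B - b)))).
  by rewrite mulr_sumr; apply: eq_bigr => b _; rewrite mulr_sumr.
rewrite exchange_big /= [RHS](reindex_inj rev_ord_inj); apply: eq_bigr => a _.
rewrite [RHS](reindex_inj rev_ord_inj); apply: eq_bigr => b _ /=.
have ha : (a <= A)%N by rewrite -ltnS.
have hb : (b <= B)%N by rewrite -ltnS.
rewrite !subSS !subKn // [(a * _)%N]mulnC.
rewrite -[in LHS](_ : (A - a + (B - b) + (a + b) = A + B)%N); last by lia.
by rewrite exprD; ring.
Qed.

Lemma qswap_add c d : qswap (qadd c d) = qadd (qswap c) (qswap d).
Proof. by apply: qseries_ext => A B; rewrite /qswap /qadd mulrDr. Qed.

Lemma qswap_one : qswap qone = qone.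
Proof.
by apply: qseries_ext => -[|A] [|B]; rewrite /qswap /qone //= ?mulr0 ?mul1r.
Qed.

Lemma qswap_qX u : qswap (qX u) = qY (negps u).
Proof.
by apply: qseries_ext => -[|A] B; rewrite /qswap /qX /qY /negps //= mulr0.
Qed.

Lemma qswap_qY u : qswap (qY u) = qX (negps u).
Proof.
by apply: qseries_ext => A [|B]; rewrite /qswap /qX /qY /negps ?addn0 //= mulr0.
Qed.

Lemma qswap_rinv m c :
  qswap m = m -> qmul m c = qone -> qswap c = c.
Proof.
move=> hm hc; have := congr1 qswap hc; rewrite qswap_mul hm qswap_one => hl.
by rewrite -[qswap c]qmuls1 -hc qmulA hl qmul1s.
Qed.

End QuantumPlane.

Arguments qone {R}.

Lemma bin2D A B : 'C(A + B, 2) = ('C(A, 2) + 'C(B, 2) + A * B)%N.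
Proof.
elim: B => [|B IH]; first by rewrite addn0 bin0n muln0 !addn0.
by rewrite addnS !binS !bin1 IH mulnS; ring.
Qed.

Section SeriesDivision.
Variable R : realType.
Implicit Types a b : nat -> R.

Lemma size_fps_div_seq b a n : size (fps_div_seq b a n) = n.+1.
Proof. by elim: n => [|n IH] //=; rewrite size_rcons IH. Qed.

Lemma nth_fps_div_seq b a n k : (k <= n)%N -> (fps_div_seq b a n)`_k = fps_div b a k.
Proof.
elim: n => [|n IH]; first by rewrite leqn0 => /eqP ->.
rewrite leq_eqVlt => /orP[/eqP -> //|hk].
by rewrite /= nth_rcons size_fps_div_seq hk IH.
Qed.

Lemma fps_divS b a n : fps_div b a n.+1 =
  (b n.+1 - \sum_(k < n.+1) fps_div b a k * a (n.+1 - k)%N) / a 0%N.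
Proof.
rewrite /fps_div /= nth_rcons size_fps_div_seq ltnn eqxx.
congr ((_ - _) / _); apply: eq_bigr => k _.
by rewrite nth_fps_div_seq // -ltnS.
Qed.

Lemma conv_fps_div b a : a 0%N != 0 -> conv (fps_div b a) a = b.
Proof.
move=> ha; apply: functional_extensionality => -[|n].
  by rewrite /conv big_ord1 /fps_div /= mulfVK.
rewrite /conv big_ord_recr /= subnn fps_divS mulfVK //.
by rewrite -/(fps_div b a) addrC subrK.
Qed.

End SeriesDivision.

Section QSeidel.
Variables (R : realType) (q : R).
Hypothesis q_neqN1 : q != -1.

Local Notation qmul := (qmul q).
Local Notation xpy_pow := (xpy_pow q).
Local Notation qsubst := (qsubst q).

Lemma two_neq0 : 2 != 0 :> R.
Proof. by rewrite pnatr_eq0. Qed.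

Lemma qint0 : qint q 0 = 0.
Proof. by rewrite /qint big_ord0. Qed.

Lemma qintD a b : qint q (a + b) = qint q a + q ^+ a * qint q b.
Proof.
rewrite /qint big_split_ord /=; congr (_ + _).
by rewrite mulr_sumr; apply: eq_bigr => i _ /=; rewrite exprD.
Qed.

Lemma qexp_eq1 m : (0 < m)%N -> q ^+ m = 1 -> q = 1.
Proof.
move=> m0 hm; have : `|q| ^+ m == 1 by rewrite -normrX hm normr1.
rewrite pexpr_eq1 // eqr_norml ler01 andbT => /orP[/eqP //|/eqP hq].
by move: q_neqN1; rewrite hq eqxx.
Qed.

Lemma qint_neq0 m : (0 < m)%N -> qint q m != 0.
Proof.
move=> m0; have [->|q1] := eqVneq q 1.
  rewrite /qint (eq_bigr (fun => 1)) => [|i _]; last by rewrite expr1n.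
  by rewrite sumr_const card_ord pnatr_eq0 -lt0n.
apply: contra q1 => /eqP h0; apply/eqP/(qexp_eq1 m0)/eqP.
by rewrite -subr_eq0 subrX1 -/(qint q m) h0 mulr0.
Qed.

Lemma one_add_qexp_neq0 j : 1 + q ^+ j != 0.
Proof.
case: j => [|j]; first by rewrite expr0 -mulr2n pnatr_eq0.
apply/eqP => h; have hj : q ^+ j.+1 = -1 by apply/eqP; rewrite -addr_eq0 addrC h.
have hq1 : q = 1.
  by apply: (@qexp_eq1 (j.+1 * 2)) => //; rewrite exprM hj sqrrN expr1n.
by move: h; rewrite hq1 expr1n; apply/eqP; exact: two_neq0.
Qed.

Lemma qpochN_neq0 a s : qpoch (- q ^+ a) q s != 0.
Proof.
rewrite /qpoch; apply/prodf_neq0 => i _.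
by rewrite mulNr opprK -exprD one_add_qexp_neq0.
Qed.

Lemma qfact0 : qfact q 0 = 1.
Proof. by rewrite /qfact big_ord0. Qed.

Lemma qfactS n : qfact q n.+1 = qfact q n * qint q n.+1.
Proof. by rewrite /qfact big_ord_recr. Qed.

Lemma qfact_neq0 n : qfact q n != 0.
Proof.
elim: n => [|n IH]; first by rewrite qfact0 oner_neq0.
by rewrite qfactS mulf_neq0 // qint_neq0.
Qed.

Definition qExp_coef n : R := q ^+ 'C(n, 2) / qfact q n.

Definition rothe x y n := \sum_(k < n.+1)
  q ^+ 'C(k, 2) * x ^+ k / qfact q k * (y ^+ (n - k) / qfact q (n - k)).

Lemma rotheS x y n : rothe x y n.+1 * qint q n.+1 = (y + q ^+ n * x) * rothe x y n.
Proof.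
have split_qint k : (k <= n.+1)%N ->
    qint q n.+1 = qint q (n.+1 - k) + q ^+ (n.+1 - k) * qint q k.
  by move=> hk; rewrite -qintD subnK.
rewrite /rothe mulr_suml (eq_bigr (fun k : 'I_n.+2 =>
   q ^+ 'C(k, 2) * x ^+ k / qfact q k * (y ^+ (n.+1 - k) / qfact q (n.+1 - k))
     * qint q (n.+1 - k)
 + q ^+ 'C(k, 2) * x ^+ k / qfact q k * (y ^+ (n.+1 - k) / qfact q (n.+1 - k))
     * (q ^+ (n.+1 - k) * qint q k))); last first.
  by move=> k _; rewrite -mulrDr -split_qint // -ltnS.
rewrite big_split /= mulrDl; congr (_ + _).
  rewrite big_ord_recr /= subnn qint0 mulr0 addr0 mulr_sumr.
  apply: eq_bigr => k _; have hk := ltn_ord k.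
  have -> : (n.+1 - k = (n - k).+1)%N by lia.
  have := @qint_neq0 (n - k).+1 isT => hS.
  by rewrite qfactS exprS; field; rewrite hS !qfact_neq0.
rewrite big_ord_recl /= qint0 !mulr0 add0r mulr_sumr.
apply: eq_bigr => k _; have hk := ltn_ord k.
rewrite /bump /= add1n subSS.
have -> : q ^+ n = q ^+ (n - k) * q ^+ k by rewrite -exprD subnK // -ltnS.
have := @qint_neq0 k.+1 isT => hS.
by rewrite qfactS binS bin1 !exprD exprS; field; rewrite hS !qfact_neq0.
Qed.

Lemma rothe_prod x y n : rothe x y n * qfact q n = \prod_(i < n) (y + q ^+ i * x).
Proof.
elim: n => [|n IH].
  by rewrite /rothe big_ord1 big_ord0 /= qfact0 !expr0 !invr1 !mulr1.
by rewrite qfactS [qfact q n * _]mulrC mulrA rotheS -mulrA IH big_ord_recr /= mulrC.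
Qed.

Lemma conv_negqExp_qexp : conv (negps qExp_coef) (qexp_coef q) = delta.
Proof.
apply: functional_extensionality => n.
have := rothe_prod (-1) 1 n; case: n => [|n].
  by rewrite /conv /negps /qExp_coef /qexp_coef /delta big_ord1 qfact0 /= invr1 !mulr1.
rewrite big_ord_recl /= expr0 mul1r subrr mul0r => /eqP.
rewrite mulf_eq0 (negbTE (qfact_neq0 _)) orbF => /eqP hr.
transitivity (rothe (-1) 1 n.+1); last by rewrite hr.
apply: eq_bigr => k _; rewrite /negps /qExp_coef /qexp_coef expr1n; ring.
Qed.

Lemma conv_negqexp_qExp : conv (negps (qexp_coef q)) qExp_coef = delta.
Proof.
rewrite -[qExp_coef]negpsK -negps_conv convC.
by rewrite conv_negqExp_qexp negps_delta.
Qed.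

Lemma xpy_pow_coef n A B : xpy_pow n A B =
  if (A + B == n)%N then qfact q n / (qfact q A * qfact q B) else 0.
Proof.
elim: n A B => [|n IH] A B.
  by case: A B => [|A] [|B]; rewrite /= /qone //= qfact0 mulr1 divr1.
rewrite [xpy_pow n.+1]/= qmul_qxy_coef.
case: A => [|A]; case: B => [|B]; rewrite ?IH ?addr0 ?add0r //.
- rewrite !add0n eqSS; case: eqP => [->|] //.
  by rewrite qfact0 !mul1r !divff // qfact_neq0.
- rewrite !addn0 eqSS expr0 mul1r; case: eqP => [->|] //.
  by rewrite qfact0 !mulr1 !divff // qfact_neq0.
have -> : (A + B.+1 == n)%N = (A.+1 + B.+1 == n.+1)%N by rewrite addSn.
have -> : (A.+1 + B == n)%N = (A.+1 + B.+1 == n.+1)%N by rewrite addnS.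
case: eqP => [hn|_]; last by rewrite mulr0 addr0.
have -> : n = (A + B).+1 by move: hn; lia.
rewrite !qfactS (_ : (A + B).+2 = B.+1 + A.+1)%N ?qintD; last by lia.
have := @qint_neq0 A.+1 isT; have := @qint_neq0 B.+1 isT => hB hA.
by rewrite exprS; field; rewrite hA hB !qfact_neq0.
Qed.

Lemma qsubst_qexp : qsubst (qexp_coef q) = qmul (qX (qexp_coef q)) (qY (qexp_coef q)).
Proof.
apply: qseries_ext => A B; rewrite qmulXY_coef /qsubst /qexp_coef xpy_pow_coef eqxx.
by field; rewrite !qfact_neq0.
Qed.

Lemma qsubst_qExp : qsubst qExp_coef = qmul (qY qExp_coef) (qX qExp_coef).
Proof.
apply: qseries_ext => A B; rewrite qmulYX_coef /qsubst /qExp_coef xpy_pow_coef eqxx.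
by rewrite bin2D !exprD mulnC; field; rewrite !qfact_neq0.
Qed.

Definition qD := conv (qexp_coef q) qExp_coef.
Definition qM := qadd (qY qD) (qX (negps qD)).
Definition qQ p := qmul (qmul (qX qExp_coef) (qsubst p)) (qX (qexp_coef q)).

Lemma qmul_qM_qQ p : conv (addps qD delta) p = delta -> qmul qM (qQ p) = qone.
Proof.
move=> hp.
have hX : qmul (qX (negps qD)) (qX qExp_coef) = qX (negps qExp_coef).
  rewrite qmulXX /qD negps_conv [conv (negps _) (negps _)]convC convA.
  by rewrite conv_negqexp_qExp conv_delta.
have hY : qmul (qY qD) (qX qExp_coef) = qmul (qX (negps qExp_coef)) (qsubst qD).
  transitivity (qmul (qmul (qmul (qmul (qX (negps qExp_coef)) (qX (qexp_coef q)))
                  (qY (qexp_coef q))) (qY qExp_coef)) (qX qExp_coef)).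
    by rewrite qmulXX conv_negqExp_qexp qX_delta qmul1s qmulYY.
  by rewrite /qD -qsubst_mul qsubst_qexp qsubst_qExp !qmulA.
have hMX : qmul qM (qX qExp_coef) = qmul (qX (negps qExp_coef)) (qsubst (addps qD delta)).
  by rewrite /qM qmulDl hX hY qsubst_add qsubst_delta qmulDr qmuls1.
rewrite /qQ !qmulA hMX -[qmul (qmul (qX _) _) (qsubst p)]qmulA qsubst_mul hp qsubst_delta qmuls1.
by rewrite qmulXX conv_negqExp_qexp qX_delta.
Qed.

Lemma qswap_qM : qswap qM = qM.
Proof. by rewrite /qM qswap_add qswap_qX qswap_qY negpsK qaddC. Qed.

Definition qplus_prod B s := \prod_(i < s) (q ^+ B + q ^+ i).

Definition qQ_term p B a k := p (a + B)%N
  * (qfact q (a + B) / (qfact q a * qfact q B)) * (qplus_prod B k / qfact q k).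

Lemma qQ_coef p A B : qQ p A B = \sum_(a < A.+1) qQ_term p B a (A - a).
Proof.
rewrite /qQ qmul_qX_coef.
pose F a c := qsubst p a B * (qExp_coef c * qexp_coef q (A - a - c)%N
                                * q ^+ (B * (A - a - c))).
transitivity (\sum_(a' < A.+1) \sum_(a < a'.+1) F a (a' - a)%N).
  apply: eq_bigr => a' _; rewrite qX_mul_coef !mulr_suml.
  rewrite (reindex_inj rev_ord_inj); apply: eq_bigr => a _ /=.
  have ha : (a <= a')%N by rewrite -ltnS.
  rewrite subSS subKn // /F.
  have -> : (A - a - (a' - a) = A - a')%N by have := ltn_ord a'; lia.
  by ring.
rewrite sum_triangle; apply: eq_bigr => a _.
rewrite /F /qQ_term -mulr_sumr /qsubst xpy_pow_coef eqxx; congr (_ * _).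
have -> : qplus_prod B (A - a) = rothe 1 (q ^+ B) (A - a) * qfact q (A - a).
  by rewrite rothe_prod; apply: eq_bigr => i _; rewrite mulr1.
rewrite mulfK ?qfact_neq0 //; apply: eq_bigr => c _.
by rewrite /qExp_coef /qexp_coef expr1n mulr1 -exprM mulnC; ring.
Qed.

Lemma qden_coef0 : qden_coef q 0%N = 2.
Proof. by rewrite /qden_coef /qexp_coef qfact0 invr1 expr0 mul1r. Qed.

Lemma qden_coef_odd m : odd m -> qden_coef q m = 0.
Proof. by move=> hm; rewrite /qden_coef -signr_odd hm expr1 mulN1r subrr. Qed.

Lemma qnum_coef_odd m : odd m -> qnum_coef q m = 0.
Proof.
case: m => [//|m] /= hm.
by rewrite /qnum_coef -signr_odd (negbTE hm) expr0 mul1r subrr.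
Qed.

Lemma qgen_series_odd m : odd m -> qgen_series q m = 0.
Proof.
elim/ltn_ind: m => -[//|m] IH hm.
rewrite /qgen_series fps_divS qnum_coef_odd // add0r big1 ?oppr0 ?mul0r // => k _.
have hk := ltn_ord k; case hok: (odd k); first by rewrite -/(qgen_series q) IH // mul0r.
by rewrite qden_coef_odd ?mulr0 // oddB ?hm ?hok // ltnW.
Qed.

Lemma conv_qgen_series_qden : conv (qgen_series q) (qden_coef q) = qnum_coef q.
Proof. by rewrite conv_fps_div // qden_coef0 two_neq0. Qed.

Lemma conv_qnum_qExpS n : conv (qnum_coef q) qExp_coef n.+1 = qD n - delta n.
Proof.
rewrite /conv big_ord_recl /= mul0r add0r.
rewrite -(congr1 (fun f => f n) conv_negqexp_qExp) /qD /conv -sumrB.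
apply: eq_bigr => k _; rewrite /bump /= add1n subSS /negps /qexp_coef; ring.
Qed.

(* p(z) = e(-z) / (e(z) + e(-z)) = (1 - G(z)/z) / 2, where G is the generating
   series of the q-Genocchi numbers *)
Definition seidel_p n := (delta n - qgen_series q n.+1) / 2.

Lemma conv_qD_seidel_p : conv (addps qD delta) seidel_p = delta.
Proof.
have hF : addps qD delta = conv (qden_coef q) qExp_coef.
  change (qden_coef q) with (addps (qexp_coef q) (negps (qexp_coef q))).
  by rewrite conv_addl conv_negqexp_qExp.
apply: functional_extensionality => n.
have hG : conv (qgen_series q) (addps qD delta) n.+1 = qD n - delta n.
  by rewrite hF -convA conv_qgen_series_qden conv_qnum_qExpS.
have hS : conv (qgen_series q) (addps qD delta) n.+1
         = \sum_(k < n.+1) qgen_series q k.+1 * addps qD delta (n - k)%N.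
  rewrite /conv big_ord_recl /= [qgen_series q 0%N]/qgen_series /fps_div /= !mul0r add0r.
  by apply: eq_bigr => k _; rewrite /bump /= add1n subSS.
rewrite convC.
transitivity ((conv delta (addps qD delta) n
               - conv (qgen_series q) (addps qD delta) n.+1) / 2).
  by rewrite hS /conv -sumrB mulr_suml; apply: eq_bigr => k _; rewrite /seidel_p; ring.
rewrite [conv delta _]convC conv_delta hG /addps.
by rewrite (_ : _ - _ = delta n * 2) ?mulfK ?two_neq0 //; ring.
Qed.

Local Notation p := seidel_p.

Lemma qQ_seidel_antisym m : qQ p m m.+1 + qQ p m.+1 m = 0.
Proof.
have hQ := qswap_rinv qswap_qM (qmul_qM_qQ conv_qD_seidel_p).
have := congr1 (fun c => c m.+1 m) hQ; rewrite /qswap => <-.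
have ho : odd (m.+1 + m) by rewrite addSn /= oddD addbb.
by rewrite -signr_odd ho expr1 mulN1r addrN.
Qed.

Lemma sum_sub_succ s : (\sum_(i < s) (s - i.+1))%N = 'C(s, 2).
Proof.
rewrite -bin2_sum big_mkord (reindex_inj rev_ord_inj).
by apply: eq_bigr => i _ /=; have := ltn_ord i; lia.
Qed.

Lemma qplus_prodE B s : (s <= B.+1)%N ->
  qplus_prod B s = q ^+ 'C(s, 2) * \prod_(i < s) (1 + q ^+ (B.+1 - s + i)).
Proof.
move=> hs; rewrite /qplus_prod (reindex_inj rev_ord_inj) /=.
rewrite (eq_bigr (fun i : 'I_s => q ^+ (s - i.+1) * (1 + q ^+ (B.+1 - s + i)))).
  by rewrite big_split /= prodrXr sum_sub_succ.
move=> i _; have hi := ltn_ord i.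
rewrite mulrDr mulr1 -exprD addrC; congr (_ + _ ^+ _); lia.
Qed.

Lemma qplus_prod_shift m s : (s <= m.+1)%N ->
  (1 + q ^+ m.+1) * qplus_prod m s = (1 + q ^+ (m.+1 - s)) * qplus_prod m.+1 s.
Proof.
move=> hs; rewrite (qplus_prodE hs) (@qplus_prodE m.+1 s) ?(leq_trans hs) //.
rewrite mulrCA [RHS]mulrCA; congr (_ * _).
transitivity (\prod_(i < s.+1) (1 + q ^+ (m.+1 - s + i))).
  by rewrite big_ord_recr /= mulrC subnK.
rewrite big_ord_recl /= addn0; congr (_ * _); apply: eq_bigr => i _.
by rewrite /bump /= add1n; congr (1 + _ ^+ _); lia.
Qed.

Lemma qplus_prod_qpoch n s : (s <= n)%N ->
  q ^+ 'C(s, 2) * qpoch (- q ^+ (n - s + 1)) q s = qplus_prod n s.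
Proof.
move=> hs; rewrite qplus_prodE ?(leq_trans hs) //; congr (_ * _).
by apply: eq_bigr => i _; rewrite mulNr opprK -exprD; congr (1 + _ ^+ _); lia.
Qed.

Lemma qpochN_split m s :
  qpoch (- q ^+ m.+1) q s * qpoch (- q) q m = qpoch (- q) q (m + s).
Proof.
rewrite /qpoch big_split_ord /= mulrC; congr (_ * _); apply: eq_bigr => i _.
by rewrite !mulNr !opprK -!exprS -exprD addSn.
Qed.

Lemma qint_mean m a : qint q (m + a).+2 =
  ((1 + q ^+ m.+1) * qint q a.+1 + qint q m.+1 * (1 + q ^+ a.+1)) / 2.
Proof.
have h1 : qint q (m + a).+2 = qint q m.+1 + q ^+ m.+1 * qint q a.+1.
  by rewrite -qintD addSn addnS.
have h2 : qint q (m + a).+2 = qint q a.+1 + q ^+ a.+1 * qint q m.+1.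
  by rewrite -qintD addnC addSn addnS.
by apply: (canRL (mulfK two_neq0)); rewrite mulrDr mulr1 {1}h1 h2; ring.
Qed.

Definition seidel_term n s := qfact q (2 * n - s)%N * qplus_prod n s
  * p (2 * n - 1 - s)%N / (qfact q s * qfact q (n - s)%N).

Definition seidel_weight m := (1 + q ^+ m.+1) * qfact q m.+1 / 2.

Lemma seidel_term_sub m a : (a <= m)%N -> seidel_term m.+1 (m - a)%N
  = seidel_weight m * (qQ_term p m.+1 a (m - a)%N + qQ_term p m a.+1 (m - a)%N).
Proof.
move=> ha; rewrite /seidel_term /seidel_weight /qQ_term subSS.
have -> : (2 * m.+1 - (m - a) = (m + a).+2)%N by lia.
have -> : (2 * m.+1 - 1 - (m - a) = (m + a).+1)%N by lia.
have -> : (m.+1 - (m - a) = a.+1)%N by lia.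
have -> : (a + m.+1 = (m + a).+1)%N by lia.
have -> : (a.+1 + m = (m + a).+1)%N by lia.
have hW : qplus_prod m (m - a)%N
          = (1 + q ^+ a.+1) * qplus_prod m.+1 (m - a)%N / (1 + q ^+ m.+1).
  rewrite -(_ : (m.+1 - (m - a) = a.+1)%N) -?qplus_prod_shift; last by lia.
    by field; rewrite one_add_qexp_neq0.
  by rewrite (leq_trans (leq_subr a m)).
rewrite hW qfactS qint_mean !qfactS.
have := @qint_neq0 a.+1 isT; have := @qint_neq0 m.+1 isT => hm ha'.
by field; rewrite !qfact_neq0 ha' hm one_add_qexp_neq0.
Qed.

Lemma seidel_term_last m :
  seidel_term m.+1 m.+1 = seidel_weight m * qQ_term p m 0 m.+1.
Proof.
rewrite /seidel_term /seidel_weight /qQ_term subnn add0n.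
have -> : (2 * m.+1 - m.+1 = m.+1)%N by lia.
have -> : (2 * m.+1 - 1 - m.+1 = m)%N by lia.
have hW : qplus_prod m m.+1 = 2 * qplus_prod m.+1 m.+1 / (1 + q ^+ m.+1).
  rewrite -[2](_ : 1 + q ^+ (m.+1 - m.+1) = 2); last by rewrite subnn expr0.
  by rewrite -qplus_prod_shift //; field; rewrite one_add_qexp_neq0.
rewrite hW qfact0 !qfactS.
have := @qint_neq0 m.+1 isT => hm.
by field; rewrite !qfact_neq0 hm one_add_qexp_neq0.
Qed.

Lemma sum_seidel_term m : \sum_(s < m.+2) seidel_term m.+1 s = 0.
Proof.
transitivity (seidel_weight m * (qQ p m m.+1 + qQ p m.+1 m)); last first.
  by rewrite qQ_seidel_antisym mulr0.
rewrite !qQ_coef (reindex_inj rev_ord_inj) /= big_ord_recl.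
rewrite [X in _ = _ * (_ + X)]big_ord_recl /= subn1 /= seidel_term_last.
rewrite !mulrDr addrCA; congr (_ + _).
rewrite -mulrDr -big_split mulr_sumr; apply: eq_bigr => a _.
by rewrite /bump /= add1n !subSS seidel_term_sub // -ltnS.
Qed.

Lemma seidel_p_even j : ~~ odd j -> (0 < j)%N -> p j = 0.
Proof.
move=> hj j0; rewrite /seidel_p /delta qgen_series_odd //=.
by rewrite eqn0Ngt j0 subrr mul0r.
Qed.

Lemma seidel_term_odd n s : (s < 2 * n - 1)%N -> odd s -> seidel_term n s = 0.
Proof.
move=> hs hso; rewrite /seidel_term seidel_p_even ?mulr0 ?mul0r //; last by lia.
by rewrite oddB ?oddB ?odd_double ?hso //; lia.
Qed.

Definition seidel_const n := 2 * (-1) ^+ n * qfact q n / qpoch (- q) q (2 * n - 1).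

Lemma seidel_summand n k : (1 <= n)%N -> (2 * k <= n)%N ->
  q ^+ 'C(2 * k, 2) * qbinom q n (2 * k) * (-1) ^+ k
     * (qpoch (- q ^+ (n - 2 * k + 1)) q (2 * k)
        / qpoch (- q ^+ (2 * n - 2 * k)) q (2 * k))
     * qGenocchi q (2 * n - 2 * k)
  = seidel_const n * seidel_term n (2 * k).
Proof.
move=> hn hk; rewrite /seidel_const /seidel_term /qGenocchi /qbinom.
set M := (2 * n - 2 * k - 1)%N.
have -> : (2 * n - 2 * k = M.+1)%N by rewrite /M; lia.
have -> : (2 * n - 1 - 2 * k = M)%N by rewrite /M; lia.
have -> : (2 * n - 1 = M + 2 * k)%N by rewrite /M; lia.
have -> : (M.+1./2 = n - k)%N by rewrite /M; lia.
have hG : qgen_series q M.+1 = - (2 * p M).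
  have hM : delta M = 0 :> R by rewrite /delta (_ : M == 0 = false) //; lia.
  by rewrite /seidel_p hM sub0r; field.
rewrite /= hG.
rewrite -(qplus_prod_qpoch hk) -(qpochN_split M (2 * k)).
rewrite (_ : (-1) ^+ n = (-1) ^+ k * (-1) ^+ (n - k).-1 * (-1) :> R); last first.
  by rewrite -exprD -exprSr; congr (_ ^+ _); lia.
have := qpochN_neq0 1 M; rewrite expr1 => hM.
by field; rewrite !qfact_neq0 qpochN_neq0 hM ?two_neq0.
Qed.

Lemma sum_even_seidel_term n : (1 <= n)%N ->
  \sum_(k < n./2.+1) seidel_term n (2 * k)
  = - \sum_(k < uphalf n) seidel_term n (2 * k).+1.
Proof.
case: n => [//|m] _; apply/eqP; rewrite -addr_eq0 -sum_parity_split.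
by rewrite sum_seidel_term.
Qed.

Lemma sum_odd_seidel_term n : (2 <= n)%N ->
  \sum_(k < uphalf n) seidel_term n (2 * k).+1 = 0.
Proof.
move=> hn; apply: big1 => k _; apply: seidel_term_odd; last by rewrite /= mul2n odd_double.
by have := ltn_ord k; lia.
Qed.

Lemma seidel_const1 : seidel_const 1 * - seidel_term 1 1 = 1.
Proof.
rewrite /seidel_const /seidel_term /seidel_p /qplus_prod /qpoch /delta /=.
rewrite (_ : (2 * 1 - 1 - 1).+1 = 1)%N // qgen_series_odd //.
rewrite qfactS qfact0 /qint !big_ord1 !expr0 !expr1 !mulr1 mul1r opprK.
have := one_add_qexp_neq0 1; rewrite expr1 => hq1.
by field.
Qed.

End QSeidel.

Theorem theorem3p5 (R : realType) (q : R) (n : nat) :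
  q != -1 -> (1 <= n)%N ->
  \sum_(k < (n./2).+1)
     q ^+ 'C(2 * k, 2) * qbinom q n (2 * k) * (-1) ^+ k
     * (qpoch (- q ^+ (n - 2 * k + 1)) q (2 * k)
        / qpoch (- q ^+ (2 * n - 2 * k)) q (2 * k))
     * qGenocchi q (2 * n - 2 * k)
  = (n == 1)%N%:R.
Proof.
move=> hq hn.
rewrite (eq_bigr (fun k : 'I_n./2.+1 => seidel_const q n * seidel_term q n (2 * k)));
  last by move=> k _; rewrite (seidel_summand hq) //; have := ltn_ord k; lia.
rewrite -mulr_sumr (sum_even_seidel_term hq) //.
have [n1 | n_gt1] := eqVneq n 1%N.
  by rewrite n1 /= big_ord1 (seidel_const1 hq).
by rewrite (sum_odd_seidel_term hq) ?oppr0 ?mulr0 //; lia.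
Qed.
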